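(* Let $P$ and $Q$ be two plane posets with $P\leq Q$. Then any path in the (oriented) Hasse graph of the poset $(\mathcal{PP},\leq)$ from $P$ to $Q$ has length $\ell(Q)-\ell(P)$, where $\ell(R)=\sharp\{(x,y)\in R^2\mid x<_r y\}$ is the level of a plane poset $R$.
   Context: A plane poset is a finite set with two partial orders $\leq_h,\leq_r$ such that two distinct elements are $\leq_h$-comparable iff they are not $\leq_r$-comparable; $\mathcal{PP}$ is the set of isomorphism classes of plane posets. On a plane poset, $x\leq y$ iff ($x\leq_h y$ or $x\leq_r y$) is a total order (known fact). For $P,Q$ of equal cardinality, $\theta_{P,Q}$ is the increasing bijection $P\to Q$ and $P\leq Q$ means: for all $x,y\in P$, $\theta_{P,Q}(x)\leq_h\theta_{P,Q}(y)$ in $Q$ implies $x\leq_h y$ in $P$; this is a partial order on each set of plane posets of fixed cardinality (posets of different cardinalities are incomparable). *)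

From mathcomp Require Import all_boot all_order all_algebra.
Set Implicit Arguments. Unset Strict Implicit. Unset Printing Implicit Defensive.

Record PlanePoset := {
  pp_T : finType;
  leh : rel pp_T;
  ler : rel pp_T;
  leh_refl : reflexive leh;
  leh_anti : antisymmetric leh;
  leh_trans : transitive leh;
  ler_refl : reflexive ler;
  ler_anti : antisymmetric ler;
  ler_trans : transitive ler;
  pp_plane : forall x y : pp_T, x != y ->
     (leh x y || leh y x) = ~~ (ler x y || ler y x)
}.

Definition pp_le (P : PlanePoset) (x y : pp_T P) : bool := @leh P x y || @ler P x y.

Definition pp_ltr (P : PlanePoset) (x y : pp_T P) : bool := (x != y) && @ler P x y.

Definition level (P : PlanePoset) : nat :=
  #|[set p : pp_T P * pp_T P | @pp_ltr P p.1 p.2]|.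

(* isomorphism of plane posets (equality in PP) *)
Definition pp_iso (P Q : PlanePoset) : Prop :=
  exists f : pp_T P -> pp_T Q, bijective f /\
    (forall x y, @leh Q (f x) (f y) = @leh P x y) /\
    (forall x y, @ler Q (f x) (f y) = @ler P x y).

(* P <= Q : with theta the increasing bijection P -> Q (for the total orders;
   it is unique when it exists, and exists iff #P = #Q),
   theta x <=_h theta y in Q implies x <=_h y in P. *)
Definition pp_leq (P Q : PlanePoset) : Prop :=
  exists theta : pp_T P -> pp_T Q, bijective theta /\
    (forall x y, @pp_le Q (theta x) (theta y) = @pp_le P x y) /\
    (forall x y, @leh Q (theta x) (theta y) -> @leh P x y).

Definition hasse_edge (P Q : PlanePoset) : Prop :=
  pp_leq P Q /\ ~ pp_iso P Q /\
  forall R : PlanePoset, pp_leq P R -> pp_leq R Q -> pp_iso R P \/ pp_iso R Q.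

From mathcomp Require Import all_boot all_order all_algebra.
From mathcomp Require Import zify.
Set Implicit Arguments. Unset Strict Implicit. Unset Printing Implicit Defensive.

(* Every edge P -> Q of the Hasse graph raises the level by exactly one, so a
   path of length k raises it by k.  For P <= Q not isomorphic, some pair
   x <_h y of P is sent by theta to an r-comparable pair of Q.  Choosing such
   a pair with as few elements as possible between x and y (for the total
   order "h-increasing or r-decreasing"), moving the single relation x <_h y
   into <=_r still gives a plane poset R, of level l(P) + 1, with P <= R <= Q.
   Since R is not isomorphic to P, the covering property forces R ~ Q. *)

Section PlanePosetFacts.
Variable P : PlanePoset.
Local Notation T := (pp_T P).
Implicit Types a b c : T.

Lemma lehT a b c : leh a b -> leh b c -> leh a c.
Proof. exact: (@leh_trans P b a c). Qed.

Lemma lerT a b c : ler a b -> ler b c -> ler a c.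
Proof. exact: (@ler_trans P b a c). Qed.

Lemma leh_asym a b : leh a b -> leh b a -> a = b.
Proof. by move=> h1 h2; apply: (@leh_anti P); rewrite h1 h2. Qed.

Lemma ler_asym a b : ler a b -> ler b a -> a = b.
Proof. by move=> h1 h2; apply: (@ler_anti P); rewrite h1 h2. Qed.

Lemma leh_ler_exclusive a b :
  a != b -> leh a b || leh b a -> ler a b || ler b a -> False.
Proof. by move=> ab h r; move: (pp_plane ab); rewrite h r. Qed.

Lemma leh_ler_total a b : a != b -> [|| leh a b, leh b a, ler a b | ler b a].
Proof.
move=> ab; move: (pp_plane ab).
by case: (leh a b); case: (leh b a); case: (ler a b); case: (ler b a).
Qed.

(* A strict total order; a discrepant pair is shrunk along it. *)
Definition lthr a b := (a != b) && (leh a b || ler b a).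

Lemma lthrr a : lthr a a = false.
Proof. by rewrite /lthr eqxx. Qed.

Lemma lthr_trans a b c : lthr a b -> lthr b c -> lthr a c.
Proof.
move=> /andP[ab h1] /andP[bc h2].
have ac : a != c.
  apply/eqP => eac; subst c.
  case/orP: h1 => h1; case/orP: h2 => h2.
  - by move: ab; rewrite (leh_asym h1 h2) eqxx.
  - by apply: (leh_ler_exclusive ab); rewrite ?h1 ?h2 ?orbT.
  - by apply: (leh_ler_exclusive ab); rewrite ?h1 ?h2 ?orbT.
  - by move: ab; rewrite (ler_asym h2 h1) eqxx.
rewrite /lthr ac /=.
case/orP: h1 => h1; case/orP: h2 => h2.
- by rewrite (lehT h1 h2).
- case/or4P: (leh_ler_total ac) => h3; rewrite ?h3 ?orbT //; exfalso.
  + by apply: (leh_ler_exclusive bc); rewrite ?(lehT h3 h1) ?h2 ?orbT.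
  + by apply: (leh_ler_exclusive ab); rewrite ?(lerT h3 h2) ?h1 ?orbT.
- case/or4P: (leh_ler_total ac) => h3; rewrite ?h3 ?orbT //; exfalso.
  + by apply: (leh_ler_exclusive ab); rewrite ?(lehT h2 h3) ?h1 ?orbT.
  + by apply: (leh_ler_exclusive bc); rewrite ?(lerT h1 h3) ?h2 ?orbT.
- by rewrite (lerT h2 h1) orbT.
Qed.

Definition between a b := [set w | lthr a w && lthr w b].

Lemma card_between_ltl a b c : lthr a b -> lthr b c ->
  #|between a b| < #|between a c|.
Proof.
move=> ab bc; apply: proper_card; apply/properP; split.
  apply/subsetP => w; rewrite !inE => /andP[-> wb] /=; exact: lthr_trans wb bc.
by exists b; rewrite !inE ?ab ?bc ?lthrr.
Qed.

Lemma card_between_ltr a b c : lthr a b -> lthr b c ->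
  #|between b c| < #|between a c|.
Proof.
move=> ab bc; apply: proper_card; apply/properP; split.
  apply/subsetP => w; rewrite !inE => /andP[bw ->]; rewrite andbT.
  exact: lthr_trans ab bw.
by exists b; rewrite !inE ?ab ?bc ?lthrr.
Qed.

End PlanePosetFacts.

Lemma pp_iso_level P Q : pp_iso P Q -> level P = level Q.
Proof.
move=> [f [[g fK gK] [_ fr]]]; rewrite /level.
set F := fun p : pp_T P * pp_T P => (f p.1, f p.2).
have F_inj : injective F by move=> [a b] [c d] [/(can_inj fK) -> /(can_inj fK) ->].
suff -> : [set p : pp_T Q * pp_T Q | pp_ltr p.1 p.2] =
         F @: [set p : pp_T P * pp_T P | pp_ltr p.1 p.2] by rewrite card_imset.
apply/setP => -[a b]; apply/idP/idP.
  rewrite inE /pp_ltr /= => ltab; apply/imsetP; exists (g a, g b).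
    by rewrite inE /pp_ltr /= -fr !gK (can_eq gK).
  by rewrite /F /= !gK.
move=> /imsetP [[c d]]; rewrite inE /pp_ltr /= => ltcd [-> ->].
by rewrite inE /pp_ltr /= fr (can_eq fK).
Qed.

(* The hypotheses make the new
   relations transitive: nothing lies h-strictly between x and y, and every
   r-predecessor of x (r-successor of y) is one of y (of x). *)
Section FlipEdge.
Variable P : PlanePoset.
Local Notation T := (pp_T P).
Variables x y : T.
Hypothesis xy : x != y.
Hypothesis hxy : leh x y.
Hypothesis no_leh_between : forall z, z != x -> z != y -> leh x z -> leh z y -> False.
Hypothesis ler_pred_x : forall u, u != x -> ler u x -> ler u y.
Hypothesis ler_succ_y : forall v, v != y -> ler y v -> ler x v.

Definition leh_flip (a b : T) := leh a b && ~~ ((a == x) && (b == y)).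
Definition ler_flip (a b : T) := ler a b || ((a == x) && (b == y)).

Lemma leh_flip_refl : reflexive leh_flip.
Proof.
move=> a; rewrite /leh_flip leh_refl /=.
by apply/negP => /andP[/eqP -> /eqP e]; move: xy; rewrite e eqxx.
Qed.

Lemma leh_flip_anti : antisymmetric leh_flip.
Proof. by move=> a b /andP[/andP[h1 _] /andP[h2 _]]; apply: leh_asym h1 h2. Qed.

Lemma leh_flip_trans : transitive leh_flip.
Proof.
move=> b a c /andP[h1 n1] /andP[h2 n2]; rewrite /leh_flip (lehT h1 h2) /=.
apply/negP => /andP[/eqP ea /eqP ec]; subst a c.
apply: (no_leh_between (z:=b)) => //.
- by apply/eqP => eb; subst b; move: n2; rewrite !eqxx.
- by apply/eqP => eb; subst b; move: n1; rewrite !eqxx.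
Qed.

Lemma ler_flip_refl : reflexive ler_flip.
Proof. by move=> a; rewrite /ler_flip ler_refl. Qed.

Lemma ler_flip_anti : antisymmetric ler_flip.
Proof.
move=> a b /andP[]; rewrite /ler_flip.
case/orP => [r1|/andP[/eqP ea /eqP eb]]; case/orP => [r2|/andP[/eqP eb' /eqP ea']].
- exact: ler_asym r1 r2.
- by subst; exfalso; apply: (leh_ler_exclusive xy); rewrite ?hxy ?r1 ?orbT.
- by subst; exfalso; apply: (leh_ler_exclusive xy); rewrite ?hxy ?r2 ?orbT.
- by subst; move: xy; rewrite eqxx.
Qed.

Lemma ler_flip_trans : transitive ler_flip.
Proof.
move=> b a c; rewrite /ler_flip.
case/orP => [r1|/andP[/eqP ea /eqP eb]]; case/orP => [r2|/andP[/eqP eb' /eqP ec]].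
- by rewrite (lerT r1 r2).
- subst b c; case: (eqVneq a x) => [->|ax]; first by rewrite !eqxx orbT.
  by rewrite (ler_pred_x ax r1).
- subst a b; case: (eqVneq c y) => [->|cy]; first by rewrite !eqxx orbT.
  by rewrite (ler_succ_y cy r2).
- by subst; move: xy; rewrite eqxx.
Qed.

Lemma flip_plane (a b : T) : a != b ->
  (leh_flip a b || leh_flip b a) = ~~ (ler_flip a b || ler_flip b a).
Proof.
have hyx : leh y x = false.
  by apply/negP => h; move: xy; rewrite (leh_asym hxy h) eqxx.
move=> ab; rewrite /leh_flip /ler_flip.
have [/andP[/eqP ea /eqP eb]|nxy] := boolP ((a == x) && (b == y)).
  by subst a b; rewrite hyx /= orbT andbF.
have [/andP[/eqP eb /eqP ea]|nyx] := boolP ((b == x) && (a == y)).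
  by subst a b; rewrite hyx /= andbF !orbT.
by rewrite /= !andbT !orbF; apply: pp_plane.
Qed.

Definition flip_edge : PlanePoset :=
  @Build_PlanePoset T leh_flip ler_flip leh_flip_refl leh_flip_anti
    leh_flip_trans ler_flip_refl ler_flip_anti ler_flip_trans flip_plane.

Lemma pp_le_flip_edge (a b : T) : @pp_le flip_edge a b = pp_le a b.
Proof.
rewrite /pp_le /= /leh_flip /ler_flip.
have [/andP[/eqP -> /eqP ->]|nxy] := boolP ((a == x) && (b == y)).
  by rewrite hxy !orbT.
by rewrite andbT orbF.
Qed.

Lemma level_flip_edge : level flip_edge = (level P).+1.
Proof.
rewrite /level.
have -> : [set p : pp_T flip_edge * pp_T flip_edge | pp_ltr p.1 p.2] =
          (x, y) |: [set p : T * T | pp_ltr p.1 p.2].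
  apply/setP => -[a b]; rewrite !inE /pp_ltr /= /ler_flip xpair_eqE.
  have [/andP[/eqP -> /eqP ->]|nxy] := boolP ((a == x) && (b == y)).
    by rewrite xy orbT.
  by rewrite !orbF.
rewrite cardsU1 inE /pp_ltr /= xy /=.
case rxy: (ler x y) => //; exfalso.
by apply: (leh_ler_exclusive xy); rewrite ?hxy ?rxy ?orbT.
Qed.

Lemma pp_leq_flip_edge : pp_leq P flip_edge.
Proof.
exists id; split; first exact: (Bijective (g:=id)).
by split=> a b; [rewrite pp_le_flip_edge | case/andP].
Qed.

End FlipEdge.

Section Discrepancy.
Variables (P Q : PlanePoset) (th : pp_T P -> pp_T Q).
Hypothesis th_bij : bijective th.
Hypothesis pp_le_th : forall a b, pp_le (th a) (th b) = pp_le a b.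
Hypothesis leh_th : forall a b, leh (th a) (th b) -> leh a b.
Local Notation T := (pp_T P).
Implicit Types a b : T.

Definition discrepant a b := [&& a != b, leh a b & ~~ leh (th a) (th b)].

Lemma th_neq a b : a != b -> th a != th b.
Proof. by rewrite (inj_eq (bij_inj th_bij)). Qed.

Lemma ler_th_discrepant a b : leh a b -> ~~ leh (th a) (th b) -> ler (th a) (th b).
Proof. by move=> h nh; have := pp_le_th a b; rewrite /pp_le h (negbTE nh). Qed.

Lemma ler_th a b : a != b -> ler a b -> ler (th a) (th b).
Proof.
move=> ab r; have := pp_le_th a b; rewrite /pp_le r orbT.
case E: (leh (th a) (th b)) => //= _; exfalso.
by apply: (leh_ler_exclusive ab); rewrite ?(leh_th E) ?r ?orbT.
Qed.

Lemma nondiscrepant_iso : (forall a b, ~~ discrepant a b) -> pp_iso P Q.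
Proof.
move=> nd; exists th; split=> //.
have leh_thE a b : leh (th a) (th b) = leh a b.
  apply/idP/idP; first exact: leh_th.
  case: (eqVneq a b) => [-> _|ab h]; first by rewrite leh_refl.
  by move: (nd a b); rewrite /discrepant ab h /= negbK.
split=> // a b; apply/idP/idP; case: (eqVneq a b) => [-> _|ab r];
  rewrite ?ler_refl //; last exact: ler_th.
have hab : leh a b = false.
  rewrite -leh_thE; apply/negP => h.
  by apply: (leh_ler_exclusive (th_neq ab)); rewrite ?h ?r ?orbT.
by move: (pp_le_th a b); rewrite /pp_le r orbT hab.
Qed.

Lemma pp_leq_flip_edge_th x y (xy : x != y) (hxy : leh x y)
    no_between ler_pred ler_succ :
  ~~ leh (th x) (th y) -> pp_leq (flip_edge xy hxy no_between ler_pred ler_succ) Q.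
Proof.
move=> nq; exists th; split=> //; split=> a b; first by rewrite pp_le_th pp_le_flip_edge.
move=> h; rewrite /= /leh_flip (leh_th h) /=.
by apply: contraNN nq => /andP[/eqP <- /eqP <-].
Qed.

Variables x y : T.
Hypothesis discrepant_xy : discrepant x y.
Hypothesis between_min : forall a b, discrepant a b ->
  #|between x y| <= #|between a b|.

Lemma discrepant_shorter a b : #|between a b| < #|between x y| -> ~~ discrepant a b.
Proof. by move=> lt; apply/negP => /between_min; rewrite leqNgt lt. Qed.

Lemma min_discrepant_no_leh_between z :
  z != x -> z != y -> leh x z -> leh z y -> False.
Proof.
have /and3P[_ _ nq] := discrepant_xy.
move=> zx zy hxz hzy.
have lxz : lthr x z by rewrite /lthr eq_sym zx hxz.
have lzy : lthr z y by rewrite /lthr zy hzy.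
case E: (leh (th x) (th z)).
  apply: (negP (discrepant_shorter (card_between_ltr lxz lzy))).
  rewrite /discrepant zy hzy /=; apply/negP => E2.
  by move: nq; rewrite (lehT E E2).
apply: (negP (discrepant_shorter (card_between_ltl lxz lzy))).
by rewrite /discrepant eq_sym zx hxz E.
Qed.

Lemma min_discrepant_ler_pred u : u != x -> ler u x -> ler u y.
Proof.
have /and3P[xy hxy nq] := discrepant_xy.
move=> ux rux; case ruy: (ler u y) => //; exfalso.
have uy : u != y.
  by apply: contraNneq xy => euy; subst u; rewrite ler_refl in ruy.
have huy : leh u y.
  case/or4P: (leh_ler_total uy) => h //; exfalso.
  - by apply: (leh_ler_exclusive ux); rewrite ?(lehT hxy h) ?rux ?orbT.
  - by rewrite h in ruy.
  - by apply: (leh_ler_exclusive xy); rewrite ?hxy ?(lerT h rux) ?orbT.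
have lxu : lthr x u by rewrite /lthr eq_sym ux rux orbT.
have luy : lthr u y by rewrite /lthr uy huy.
apply: (negP (discrepant_shorter (card_between_ltr lxu luy))).
rewrite /discrepant uy huy /=; apply/negP => E.
have r := lerT (ler_th ux rux) (ler_th_discrepant hxy nq).
by apply: (leh_ler_exclusive (th_neq uy)); rewrite ?E ?r ?orbT.
Qed.

Lemma min_discrepant_ler_succ v : v != y -> ler y v -> ler x v.
Proof.
have /and3P[xy hxy nq] := discrepant_xy.
move=> vy ryv; case rxv: (ler x v) => //; exfalso.
have xv : x != v.
  by apply: contraNneq vy => exv; subst v; rewrite ler_refl in rxv.
have hxv : leh x v.
  case/or4P: (leh_ler_total xv) => h //; exfalso.
  - by apply: (leh_ler_exclusive vy); rewrite ?(lehT h hxy) ?ryv ?orbT.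
  - by rewrite h in rxv.
  - by apply: (leh_ler_exclusive xy); rewrite ?hxy ?(lerT ryv h) ?orbT.
have lxv : lthr x v by rewrite /lthr xv hxv.
have lvy : lthr v y by rewrite /lthr vy ryv orbT.
apply: (negP (discrepant_shorter (card_between_ltl lxv lvy))).
rewrite /discrepant xv hxv /=; apply/negP => E.
have yv : y != v by rewrite eq_sym.
have r := lerT (ler_th_discrepant hxy nq) (ler_th yv ryv).
by apply: (leh_ler_exclusive (th_neq xv)); rewrite ?E ?r ?orbT.
Qed.

End Discrepancy.

Lemma hasse_edge_level P Q : hasse_edge P Q -> level Q = (level P).+1.
Proof.
move=> [[th [th_bij [pp_le_th leh_th]]] [not_iso covers]].
case: (pickP (fun p => discrepant th p.1 p.2)) => [p0 disc_p0 | nodisc]; last first.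
  by case: not_iso; apply: (nondiscrepant_iso th_bij pp_le_th leh_th) => a b;
    rewrite (nodisc (a, b)).
case: (@arg_minnP _ p0 (fun p => discrepant th p.1 p.2)
                  (fun p => #|between p.1 p.2|) disc_p0) => -[x y] /= disc_xy min_xy.
have between_min a b := min_xy (a, b).
have /and3P[xy hxy nq] := disc_xy.
pose R := flip_edge xy hxy
  (min_discrepant_no_leh_between disc_xy between_min)
  (min_discrepant_ler_pred th_bij pp_le_th leh_th disc_xy between_min)
  (min_discrepant_ler_succ th_bij pp_le_th leh_th disc_xy between_min).
have P_R : pp_leq P R := pp_leq_flip_edge _ _ _ _ _.
have R_Q : pp_leq R Q := pp_leq_flip_edge_th th_bij pp_le_th leh_th _ _ _ _ _ nq.
have [R_iso_P | R_iso_Q] := covers R P_R R_Q.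
  by move: (pp_iso_level R_iso_P); rewrite level_flip_edge; lia.
by rewrite -(pp_iso_level R_iso_Q) level_flip_edge.
Qed.

Lemma level_hasse_path (k : nat) (s : nat -> PlanePoset) :
  (forall i, i < k -> hasse_edge (s i) (s i.+1)) -> level (s k) = level (s 0) + k.
Proof.
move=> edges; suff level_sj j : j <= k -> level (s j) = level (s 0) + j by apply: level_sj.
elim: j => [|j IH] jk; first by rewrite addn0.
by rewrite (hasse_edge_level (edges j jk)) IH ?addnS // ltnW.
Qed.

Theorem proposition27 (P Q : PlanePoset) :
  pp_leq P Q ->
  forall (k : nat) (s : nat -> PlanePoset),
    pp_iso (s 0) P -> pp_iso (s k) Q ->
    (forall i, i < k -> hasse_edge (s i) (s i.+1)) ->
    (k%:Z = (level Q)%:Z - (level P)%:Z)%R.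
Proof.
move=> _ k s iso0 isok edges.
rewrite -(pp_iso_level iso0) -(pp_iso_level isok) (level_hasse_path edges).
by lia.
Qed.
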